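(* Let H1 $=i(x,i(y,x))$, H2 $=i(i(x,i(y,z)),i(i(x,y),i(x,z)))$, H3 $=i(i(x,n(x)),n(x))$, H4 $=i(x,i(n(x),y))$. The formulas provable from H1–H4 using condensed detachment as the sole rule of inference are exactly those provable from H1–H4 using modus ponens and substitution. Moreover, if $b$ has a proof by modus ponens from substitution instances of H1–H4 in which no line contains a double negation, then $b$ has a double-negation-free condensed-detachment proof from H1–H4.
   Context: Formulas are terms built from propositional variables using the binary connective $i$ (implication) and the unary connective $n$ (negation). Modus ponens: from $i(p,q)$ and $p$ infer $q$; substitution: from $p$ infer $p\sigma$. Condensed detachment: from a major premiss $i(A,B)$ and a minor premiss $C$, after renaming variables so that the two premisses share no variables, if $A$ and $C$ are unifiable with most general unifier $\sigma$, infer $B\sigma$; alphabetic variants of axioms count as axioms and conclusions may be renamed. A formula contains a double negation if it has a (not necessarily proper) subformula of the form $n(n(t))$; a condensed-detachment proof is double-negation free if none of its deduced (non-axiom) steps contains a double negation. *)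

From Stdlib Require Import Arith.

Inductive form : Type :=
| V : nat -> form
| I : form -> form -> form
| N : form -> form.

Fixpoint subst (s : nat -> form) (f : form) : form :=
  match f with
  | V x => s x
  | I a b => I (subst s a) (subst s b)
  | N a => N (subst s a)
  end.

Definition ren (r : nat -> nat) (f : form) : form := subst (fun x => V (r x)) f.

Fixpoint occurs (x : nat) (f : form) : Prop :=
  match f with
  | V y => x = y
  | I a b => occurs x a \/ occurs x b
  | N a => occurs x a
  end.

Definition variant (g f : form) : Prop :=
  exists r : nat -> nat, (forall x y, r x = r y -> x = y) /\ g = ren r f.

Definition disjoint_vars (f g : form) : Prop :=
  forall x, occurs x f -> ~ occurs x g.

Definition unifier (s : nat -> form) (a b : form) : Prop := subst s a = subst s b.

Definition mgu (s : nat -> form) (a b : form) : Prop :=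
  unifier s a b /\
  forall t, unifier t a b -> exists r, forall x, t x = subst r (s x).

(* x = V 0, y = V 1, z = V 2 *)
Definition H1 : form := I (V 0) (I (V 1) (V 0)).
Definition H2 : form :=
  I (I (V 0) (I (V 1) (V 2))) (I (I (V 0) (V 1)) (I (V 0) (V 2))).
Definition H3 : form := I (I (V 0) (N (V 0))) (N (V 0)).
Definition H4 : form := I (V 0) (I (N (V 0)) (V 1)).

Definition is_axiom (a : form) : Prop := a = H1 \/ a = H2 \/ a = H3 \/ a = H4.

Fixpoint has_dn (f : form) : Prop :=
  match f with
  | V _ => False
  | I a b => has_dn a \/ has_dn b
  | N a => (match a with N _ => True | _ => False end) \/ has_dn a
  end.

(* provability by condensed detachment; dnf = true restricts every deduced
   step to be double-negation free *)
Inductive CDprov (dnf : bool) : form -> Prop :=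
| cd_ax : forall a f, is_axiom a -> variant f a -> CDprov dnf f
| cd_step : forall M C M' C' A B s f,
    CDprov dnf M -> CDprov dnf C ->
    variant M' M -> variant C' C -> M' = I A B ->
    disjoint_vars M' C' ->
    mgu s A C' ->
    variant f (subst s B) ->
    (dnf = true -> ~ has_dn f) ->
    CDprov dnf f.

Inductive MPprov : form -> Prop :=
| mp_ax : forall a, is_axiom a -> MPprov a
| mp_sub : forall s f, MPprov f -> MPprov (subst s f)
| mp_mp : forall a b, MPprov (I a b) -> MPprov a -> MPprov b.

Inductive MPinst_dnf : form -> Prop :=
| mpi_ax : forall a s, is_axiom a -> ~ has_dn (subst s a) -> MPinst_dnf (subst s a)
| mpi_mp : forall a b, MPinst_dnf (I a b) -> MPinst_dnf a -> ~ has_dn b -> MPinst_dnf b.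

(* Every condensed-detachment step is an instance of modus ponens after
   substitution, so the work lies in the converse, where condensed detachment
   only ever produces most general conclusions.  Two special detachments are
   admissible: if the minor premiss is more general than the antecedent of the
   major, the consequent itself follows; if the antecedent is more general than
   the minor, the corresponding instance of the consequent follows.  With them,
   and with a dozen theorems derived from H1-H4 (among them B, C, contraposition
   and (a ⊃ b) ⊃ (c ⊃ d) ⊃ (b ⊃ c) ⊃ a ⊃ d), every instance u ⊃ u of the identity
   is obtained by induction on u under a prefix (v ⊃ v) ⊃ ... of identities on
   the variables of u, which is finally discharged against x ⊃ x.  Detaching an
   axiom from the matching instance of the identity gives all substitution
   instances of the axioms, after which modus ponens is simulated step by step.
   No formula introduced along the way contains a double negation unless the
   target does. *)

From Stdlib Require Import Arith Lia List Bool.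
Import ListNotations.

Local Notation "p ⊃ q" := (I p q) (at level 65, right associativity).

Fixpoint maxvar (f : form) : nat :=
  match f with
  | V x => x
  | I a b => Nat.max (maxvar a) (maxvar b)
  | N a => maxvar a
  end.

Lemma occurs_le_maxvar x f : occurs x f -> x <= maxvar f.
Proof. induction f; simpl; intuition; subst; lia. Qed.

Fixpoint occb (x : nat) (f : form) : bool :=
  match f with
  | V y => x =? y
  | I a b => occb x a || occb x b
  | N a => occb x a
  end.

Lemma occb_iff x f : occb x f = true <-> occurs x f.
Proof.
  induction f; simpl.
  - apply Nat.eqb_eq.
  - rewrite orb_true_iff, IHf1, IHf2; reflexivity.
  - exact IHf.
Qed.

Lemma occb_false_iff x f : occb x f = false <-> ~ occurs x f.
Proof. rewrite <- occb_iff; destruct (occb x f); intuition congruence. Qed.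

Lemma subst_ext s1 s2 f :
  (forall x, occurs x f -> s1 x = s2 x) -> subst s1 f = subst s2 f.
Proof. induction f; simpl; intros H; f_equal; auto. Qed.

Lemma subst_fix s f : (forall x, occurs x f -> s x = V x) -> subst s f = f.
Proof. induction f; simpl; intros H; f_equal; auto. Qed.

Lemma subst_id f : subst V f = f.
Proof. apply subst_fix; reflexivity. Qed.

Lemma subst_comp s1 s2 f :
  subst s1 (subst s2 f) = subst (fun x => subst s1 (s2 x)) f.
Proof. induction f; simpl; congruence. Qed.

Lemma subst_agree s1 s2 f x :
  subst s1 f = subst s2 f -> occurs x f -> s1 x = s2 x.
Proof.
  induction f; simpl; intros H Hx.
  - subst; exact H.
  - injection H; intros; destruct Hx; auto.
  - injection H; auto.
Qed.

Lemma occurs_ren x r f : occurs x (ren r f) <-> exists y, occurs y f /\ x = r y.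
Proof.
  unfold ren; induction f; simpl.
  - split; [eauto | intros [y [-> ->]]; reflexivity].
  - rewrite IHf1, IHf2; firstorder.
  - exact IHf.
Qed.

Lemma has_dn_ren r f : has_dn (ren r f) <-> has_dn f.
Proof.
  unfold ren; induction f; simpl.
  - reflexivity.
  - rewrite IHf1, IHf2; reflexivity.
  - rewrite IHf; destruct f; simpl; reflexivity.
Qed.

Lemma ren_comp r1 r2 f : ren r1 (ren r2 f) = ren (fun x => r1 (r2 x)) f.
Proof. unfold ren; rewrite subst_comp; reflexivity. Qed.

Lemma variant_refl f : variant f f.
Proof. exists (fun x => x); split; [auto | symmetry; apply subst_id]. Qed.

Definition dn_ok (d : bool) (f : form) : Prop := d = true -> ~ has_dn f.

Lemma dn_ok_false f : dn_ok false f.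
Proof. discriminate. Qed.

Lemma CDprov_dn_ok d f : CDprov d f -> dn_ok d f.
Proof.
  intros [a g Ha [r [_ ->]] | M C M' C' A B s g _ _ _ _ _ _ _ _ Hdn]; [|exact Hdn].
  intros _; rewrite has_dn_ren.
  destruct Ha as [-> | [-> | [-> | ->]]]; simpl; tauto.
Qed.

Lemma CDprov_ren d f r :
  (forall x y, r x = r y -> x = y) -> CDprov d f -> CDprov d (ren r f).
Proof.
  intros Hr [a g Ha [r1 [Hr1 ->]] | M C M' C' A B s g HM HC HM' HC' HMe Hdis Hmgu [r1 [Hr1 ->]] Hdn].
  - apply cd_ax with a; [exact Ha|].
    exists (fun x => r (r1 x)); split; [auto | apply ren_comp].
  - apply cd_step with M C M' C' A B s; auto.
    + exists (fun x => r (r1 x)); split; [auto | apply ren_comp].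
    + intros Hd; rewrite !has_dn_ren; rewrite has_dn_ren in Hdn; auto.
Qed.

Lemma cd_axiom d a : is_axiom a -> CDprov d a.
Proof. intros Ha; apply cd_ax with a; [exact Ha | apply variant_refl]. Qed.

Lemma mgu_sym s a b : mgu s a b -> mgu s b a.
Proof.
  unfold mgu, unifier; intros [Hu Hm]; split; [auto|].
  intros t Ht; apply Hm; auto.
Qed.

Lemma mgu_of_matching s A C :
  disjoint_vars A C -> subst s A = C -> (forall x, ~ occurs x A -> s x = V x) ->
  mgu s A C.
Proof.
  intros Hdis HA Hout; split.
  - unfold unifier; rewrite HA; symmetry; apply subst_fix.
    intros x Hx; apply Hout; intros HxA; exact (Hdis x HxA Hx).
  - intros t Ht; exists t; intros x.
    destruct (occb x A) eqn:E.
    + apply occb_iff in E. unfold unifier in Ht; rewrite <- HA, subst_comp in Ht.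
      exact (subst_agree _ _ _ _ Ht E).
    + rewrite Hout by (apply occb_false_iff; exact E); reflexivity.
Qed.

Definition graft (K : nat) (A : form) (s : nat -> form) (z : nat) : form :=
  if (K <=? z) && occb (z - K) A then s (z - K) else V z.

Lemma graft_shift K A s y : occurs y A -> graft K A s (K + y) = s y.
Proof.
  intros Hy; apply occb_iff in Hy; unfold graft.
  replace (K <=? K + y) with true by (symmetry; apply Nat.leb_le; lia).
  replace (K + y - K) with y by lia.
  rewrite Hy; reflexivity.
Qed.

Lemma graft_low K A s z : z < K -> graft K A s z = V z.
Proof.
  intros Hz; unfold graft.
  replace (K <=? z) with false by (symmetry; apply Nat.leb_gt; lia); reflexivity.
Qed.

Section Graft.
Variables (K : nat) (A : form) (s : nat -> form) (rho : nat -> nat).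
Hypothesis rho_A : forall y, occurs y A -> rho y = K + y.

Lemma subst_graft : subst (graft K A s) (ren rho A) = subst s A.
Proof.
  unfold ren; rewrite subst_comp; apply subst_ext; intros y Hy; simpl.
  rewrite rho_A by exact Hy; apply graft_shift, Hy.
Qed.

Lemma graft_outside z : ~ occurs z (ren rho A) -> graft K A s z = V z.
Proof.
  intros Hz; unfold graft.
  destruct ((K <=? z) && occb (z - K) A) eqn:E; [|reflexivity].
  apply andb_true_iff in E as [E1 E2]; apply Nat.leb_le in E1; apply occb_iff in E2.
  exfalso; apply Hz, occurs_ren; exists (z - K); split; [exact E2|].
  rewrite rho_A by exact E2; lia.
Qed.

End Graft.

Lemma cd_mp_general_minor d A B C s :
  CDprov d (A ⊃ B) -> CDprov d C -> subst s C = A -> CDprov d B.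
Proof.
  intros HM HC HCA.
  set (K := S (maxvar (A ⊃ B))).
  assert (HK : forall x, occurs x (A ⊃ B) -> x < K)
    by (intros x Hx; apply occurs_le_maxvar in Hx; unfold K; lia).
  assert (Hdis : disjoint_vars (A ⊃ B) (ren (Nat.add K) C)).
  { intros x Hx Hc; apply occurs_ren in Hc as [y [_ ->]]; apply HK in Hx; lia. }
  apply (cd_step d (A ⊃ B) C (A ⊃ B) (ren (Nat.add K) C) A B (graft K C s));
    auto using variant_refl.
  - exists (Nat.add K); split; [intros; lia | reflexivity].
  - apply mgu_sym, mgu_of_matching.
    + intros x Hc Ha; exact (Hdis x (or_introl Ha) Hc).
    + rewrite subst_graft by (intros; reflexivity); exact HCA.
    + apply graft_outside; intros; reflexivity.
  - rewrite subst_fix; [apply variant_refl|].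
    intros x Hx; apply graft_low, HK; simpl; auto.
  - intros Hd Hb; apply (CDprov_dn_ok d _ HM Hd); simpl; auto.
Qed.

Lemma cd_mp d a b : CDprov d (a ⊃ b) -> CDprov d a -> CDprov d b.
Proof. intros Hab Ha; exact (cd_mp_general_minor d a b a V Hab Ha (subst_id a)). Qed.

Definition swap_up (A : form) (K z : nat) : nat :=
  if occb z A then K + z else if (K <=? z) && occb (z - K) A then z - K else z.

Section SwapUp.
Variables (A : form) (K : nat).
Hypothesis A_below : forall y, occurs y A -> y < K.

Lemma swap_up_in y : occurs y A -> swap_up A K y = K + y.
Proof. intros Hy; apply occb_iff in Hy; unfold swap_up; rewrite Hy; reflexivity. Qed.

Lemma swap_up_out z : ~ occurs z A -> z < K -> swap_up A K z = z.
Proof.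
  intros Hz HzK; apply occb_false_iff in Hz; unfold swap_up; rewrite Hz.
  replace (K <=? z) with false by (symmetry; apply Nat.leb_gt; lia); reflexivity.
Qed.

Lemma swap_up_involutive z : swap_up A K (swap_up A K z) = z.
Proof.
  assert (HA : forall y, occb y A = true -> y < K) by (intros y Hy; apply A_below, occb_iff, Hy).
  unfold swap_up; destruct (occb z A) eqn:E1.
  - assert (z < K) by auto.
    destruct (occb (K + z) A) eqn:E2; [apply HA in E2; lia|].
    replace (K + z - K) with z by lia; rewrite E1.
    replace (K <=? K + z) with true by (symmetry; apply Nat.leb_le; lia); reflexivity.
  - destruct ((K <=? z) && occb (z - K) A) eqn:E2.
    + apply andb_true_iff in E2 as [E2 E3]; apply Nat.leb_le in E2; rewrite E3; lia.
    + rewrite E1, E2; reflexivity.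
Qed.

Lemma swap_up_inj x y : swap_up A K x = swap_up A K y -> x = y.
Proof. intros H; rewrite <- (swap_up_involutive x), <- (swap_up_involutive y), H; reflexivity. Qed.

End SwapUp.

(* The major premiss is renamed apart by moving only the variables of [A] above
   those of [C]; the variables of [B] outside [A] keep their names, which is why
   they must already be fresh for [C]. *)
Lemma cd_mp_general_major d A B C s f :
  CDprov d (A ⊃ B) -> CDprov d C -> subst s A = C ->
  (forall x, occurs x B -> ~ occurs x A -> s x = V x /\ ~ occurs x C) ->
  subst s B = f -> dn_ok d f -> CDprov d f.
Proof.
  intros HM HC HAC HB Hf Hdn.
  set (K := S (Nat.max (maxvar (A ⊃ B)) (maxvar C))).
  assert (HKM : forall x, occurs x (A ⊃ B) -> x < K)
    by (intros x Hx; apply occurs_le_maxvar in Hx; unfold K; lia).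
  assert (HKC : forall x, occurs x C -> x < K)
    by (intros x Hx; apply occurs_le_maxvar in Hx; unfold K; lia).
  assert (HKA : forall x, occurs x A -> x < K) by (intros; apply HKM; simpl; auto).
  set (rho := swap_up A K).
  assert (Hrho : forall y, occurs y A -> rho y = K + y) by (intros; apply swap_up_in; auto).
  assert (Hdis : disjoint_vars (ren rho (A ⊃ B)) C).
  { intros x Hx Hc; apply occurs_ren in Hx as [y [Hy ->]].
    destruct (occb y A) eqn:E.
    - apply occb_iff in E; rewrite Hrho in Hc by exact E; apply HKC in Hc; lia.
    - apply occb_false_iff in E.
      assert (HyB : occurs y B) by (destruct Hy; [contradiction | assumption]).
      unfold rho in Hc; rewrite swap_up_out in Hc by auto.
      exact (proj2 (HB y HyB E) Hc). }
  apply (cd_step d (A ⊃ B) C (ren rho (A ⊃ B)) C (ren rho A) (ren rho B) (graft K A s));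
    auto using variant_refl.
  - exists rho; split; [apply swap_up_inj; exact HKA | reflexivity].
  - apply mgu_of_matching.
    + intros x Hx Hc; exact (Hdis x (or_introl Hx) Hc).
    + rewrite subst_graft by exact Hrho; exact HAC.
    + apply graft_outside; exact Hrho.
  - replace f with (subst (graft K A s) (ren rho B)); [apply variant_refl|].
    rewrite <- Hf; unfold ren; rewrite subst_comp; apply subst_ext; intros y Hy; simpl.
    destruct (occb y A) eqn:E.
    + apply occb_iff in E; rewrite Hrho by exact E; apply graft_shift, E.
    + apply occb_false_iff in E.
      assert (y < K) by (apply HKM; simpl; auto).
      unfold rho; rewrite swap_up_out, graft_low by auto.
      symmetry; exact (proj1 (HB y Hy E)).
Qed.

Fixpoint subst_of_list (l : list (nat * form)) (x : nat) : form :=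
  match l with
  | [] => V x
  | (y, f) :: l' => if x =? y then f else subst_of_list l' x
  end.

Lemma subst_of_list_factor l t :
  Forall (fun p => t (fst p) = subst t (snd p)) l ->
  forall x, t x = subst t (subst_of_list l x).
Proof.
  induction l as [|[y f] l IH]; simpl; intros H x; [reflexivity|].
  inversion H; subst.
  destruct (Nat.eqb_spec x y); [subst; assumption | auto].
Qed.

Definition apart (M C : form) : form := ren (Nat.add (S (maxvar M))) C.

(* The unifier is given as a list of bindings; it is most general as soon as
   every unifier [t] already satisfies each binding. *)
Lemma cd_detach d A B C l f :
  CDprov d (A ⊃ B) -> CDprov d C ->
  unifier (subst_of_list l) A (apart (A ⊃ B) C) ->
  (forall t, unifier t A (apart (A ⊃ B) C) ->
     Forall (fun p => t (fst p) = subst t (snd p)) l) ->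
  f = subst (subst_of_list l) B -> dn_ok d f -> CDprov d f.
Proof.
  intros HM HC Hu Hgen -> Hdn.
  apply (cd_step d (A ⊃ B) C (A ⊃ B) (apart (A ⊃ B) C) A B (subst_of_list l));
    auto using variant_refl.
  - exists (Nat.add (S (maxvar (A ⊃ B)))); split; [intros; lia | reflexivity].
  - intros x Hx Hc; apply occurs_ren in Hc as [y [_ ->]].
    apply occurs_le_maxvar in Hx; lia.
  - split; [exact Hu|]. intros t Ht; exists t; apply subst_of_list_factor; auto.
Qed.

Ltac detach M C l :=
  apply (cd_detach _ _ _ _ l _ M C);
  [ reflexivity
  | let t := fresh "t" in
    let Ht := fresh "Ht" in
    intros t Ht; unfold unifier, apart, ren in Ht; simpl in Ht;
    repeat (apply Forall_cons; [simpl; congruence |]); apply Forall_nil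
  | reflexivity
  | intros _; simpl; tauto ].

(* Each auxiliary theorem is named by the combinator term of its derivation,
   reading H1 as K, H2 as S and application as detachment (so [cd_I] is SKK and
   [cd_B] is S(KS)K).  Variable numbers are those produced by the derivation,
   where each step renames its minor premiss above the variables of the major. *)
Section Combinators.
Variable d : bool.

Let ax_K : CDprov d H1 := cd_axiom d H1 (or_introl eq_refl).
Let ax_S : CDprov d H2 := cd_axiom d H2 (or_intror (or_introl eq_refl)).
Let ax_H3 : CDprov d H3 := cd_axiom d H3 (or_intror (or_intror (or_introl eq_refl))).
Let ax_H4 : CDprov d H4 := cd_axiom d H4 (or_intror (or_intror (or_intror eq_refl))).

Lemma cd_I : CDprov d (V 5 ⊃ V 5).
Proof.
  assert (SK : CDprov d ((V 3 ⊃ V 4) ⊃ V 3 ⊃ V 3))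
    by detach ax_S ax_K [(0, V 3); (1, V 4); (2, V 3)].
  detach SK ax_K [(3, V 5); (4, V 6 ⊃ V 5)].
Qed.

Lemma cd_B : CDprov d ((V 6 ⊃ V 7) ⊃ (V 9 ⊃ V 6) ⊃ V 9 ⊃ V 7).
Proof.
  assert (KS : CDprov d (V 1 ⊃ (V 2 ⊃ V 3 ⊃ V 4) ⊃ (V 2 ⊃ V 3) ⊃ V 2 ⊃ V 4))
    by detach ax_K ax_S [(0, (V 2 ⊃ V 3 ⊃ V 4) ⊃ (V 2 ⊃ V 3) ⊃ V 2 ⊃ V 4)].
  assert (S_KS : CDprov d ((V 4 ⊃ V 5 ⊃ V 6 ⊃ V 7) ⊃ V 4 ⊃ (V 5 ⊃ V 6) ⊃ V 5 ⊃ V 7))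
    by detach ax_S KS [(0, V 4); (1, V 5 ⊃ V 6 ⊃ V 7); (2, (V 5 ⊃ V 6) ⊃ V 5 ⊃ V 7)].
  detach S_KS ax_K [(4, V 6 ⊃ V 7); (5, V 9); (8, V 6 ⊃ V 7)].
Qed.

Lemma cd_BB : CDprov d ((V 9 ⊃ V 16 ⊃ V 17) ⊃ V 9 ⊃ (V 19 ⊃ V 16) ⊃ V 19 ⊃ V 17).
Proof. detach cd_B cd_B [(6, V 16 ⊃ V 17); (7, (V 19 ⊃ V 16) ⊃ V 19 ⊃ V 17)]. Qed.

Lemma cd_C : CDprov d ((V 29 ⊃ V 28 ⊃ V 25) ⊃ V 28 ⊃ V 29 ⊃ V 25).
Proof.
  assert (BBS : CDprov d ((V 20 ⊃ V 21 ⊃ V 22) ⊃ (V 19 ⊃ V 20 ⊃ V 21) ⊃ V 19 ⊃ V 20 ⊃ V 22))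
    by detach cd_BB ax_S [(9, V 20 ⊃ V 21 ⊃ V 22); (16, V 20 ⊃ V 21); (17, V 20 ⊃ V 22)].
  assert (S_BBS : CDprov d (((V 23 ⊃ V 24 ⊃ V 25) ⊃ V 22 ⊃ V 23 ⊃ V 24)
                         ⊃ (V 23 ⊃ V 24 ⊃ V 25) ⊃ V 22 ⊃ V 23 ⊃ V 25))
    by detach ax_S BBS [(0, V 23 ⊃ V 24 ⊃ V 25); (1, V 22 ⊃ V 23 ⊃ V 24);
                     (2, V 22 ⊃ V 23 ⊃ V 25)].
  assert (KK : CDprov d (V 1 ⊃ V 2 ⊃ V 3 ⊃ V 2))
    by detach ax_K ax_K [(0, V 2 ⊃ V 3 ⊃ V 2)].
  detach S_BBS KK [(22, V 28); (23, V 29); (24, V 28); (27, V 29 ⊃ V 28 ⊃ V 25)].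
Qed.

Lemma cd_I_imp : CDprov d ((V 9 ⊃ V 15) ⊃ V 9 ⊃ V 15).
Proof. detach cd_B cd_I [(6, V 15); (7, V 15)]. Qed.

Lemma cd_I_I : CDprov d ((V 12 ⊃ V 12) ⊃ V 12 ⊃ V 12).
Proof.
  assert (SB : CDprov d (((V 9 ⊃ V 10) ⊃ V 12 ⊃ V 9) ⊃ (V 9 ⊃ V 10) ⊃ V 12 ⊃ V 10))
    by detach ax_S cd_B [(0, V 9 ⊃ V 10); (1, V 12 ⊃ V 9); (2, V 12 ⊃ V 10)].
  detach SB cd_I [(9, V 12); (10, V 12); (18, V 12 ⊃ V 12)].
Qed.

Lemma cd_imp_mono : CDprov d ((V 109 ⊃ V 106) ⊃ (V 107 ⊃ V 67) ⊃ (V 106 ⊃ V 107) ⊃ V 109 ⊃ V 67).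
Proof.
  assert (BBB : CDprov d ((V 26 ⊃ V 27) ⊃ (V 19 ⊃ V 29 ⊃ V 26) ⊃ V 19 ⊃ V 29 ⊃ V 27))
    by detach cd_BB cd_B [(9, V 26 ⊃ V 27); (16, V 29 ⊃ V 26); (17, V 29 ⊃ V 27)].
  assert (C_BBB : CDprov d ((V 49 ⊃ V 59 ⊃ V 56) ⊃ (V 56 ⊃ V 57) ⊃ V 49 ⊃ V 59 ⊃ V 57))
    by detach cd_C BBB [(25, V 49 ⊃ V 59 ⊃ V 57); (28, V 49 ⊃ V 59 ⊃ V 56);
                      (29, V 56 ⊃ V 57)].
  assert (B_C_BBB : CDprov d ((V 9 ⊃ V 59 ⊃ V 69 ⊃ V 66)
                          ⊃ V 9 ⊃ (V 66 ⊃ V 67) ⊃ V 59 ⊃ V 69 ⊃ V 67))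
    by detach cd_B C_BBB [(6, V 59 ⊃ V 69 ⊃ V 66);
                       (7, (V 66 ⊃ V 67) ⊃ V 59 ⊃ V 69 ⊃ V 67)].
  assert (CB : CDprov d ((V 39 ⊃ V 36) ⊃ (V 36 ⊃ V 37) ⊃ V 39 ⊃ V 37))
    by detach cd_C cd_B [(25, V 39 ⊃ V 37); (28, V 39 ⊃ V 36); (29, V 36 ⊃ V 37)].
  detach B_C_BBB CB [(9, V 109 ⊃ V 106); (59, V 106 ⊃ V 107); (66, V 107); (69, V 109)].
Qed.

Lemma cd_K_I : CDprov d (V 50 ⊃ (V 64 ⊃ V 64) ⊃ V 50).
Proof.
  assert (BBK : CDprov d (V 20 ⊃ (V 19 ⊃ V 21) ⊃ V 19 ⊃ V 20))
    by detach cd_BB ax_K [(9, V 20); (16, V 21); (17, V 20)].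
  assert (C_BBK : CDprov d ((V 49 ⊃ V 51) ⊃ V 50 ⊃ V 49 ⊃ V 50))
    by detach cd_C BBK [(25, V 49 ⊃ V 50); (28, V 49 ⊃ V 51); (29, V 50)].
  detach C_BBK cd_I_I [(49, V 64 ⊃ V 64); (51, V 64 ⊃ V 64)].
Qed.

Lemma cd_contra : CDprov d ((V 70 ⊃ V 71) ⊃ N (V 71) ⊃ N (V 70)).
Proof.
  assert (B_H3 : CDprov d ((V 9 ⊃ V 10 ⊃ N (V 10)) ⊃ V 9 ⊃ N (V 10)))
    by detach cd_B ax_H3 [(6, V 10 ⊃ N (V 10)); (7, N (V 10))].
  assert (B_B_H3 : CDprov d ((V 9 ⊃ V 19 ⊃ V 20 ⊃ N (V 20)) ⊃ V 9 ⊃ V 19 ⊃ N (V 20)))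
    by detach cd_B B_H3 [(6, V 19 ⊃ V 20 ⊃ N (V 20)); (7, V 19 ⊃ N (V 20))].
  assert (BC : CDprov d ((V 9 ⊃ V 39 ⊃ V 38 ⊃ V 35) ⊃ V 9 ⊃ V 38 ⊃ V 39 ⊃ V 35))
    by detach cd_B cd_C [(6, V 39 ⊃ V 38 ⊃ V 35); (7, V 38 ⊃ V 39 ⊃ V 35)].
  assert (B_H4 : CDprov d ((V 9 ⊃ V 10) ⊃ V 9 ⊃ N (V 10) ⊃ V 11))
    by detach cd_B ax_H4 [(6, V 10); (7, N (V 10) ⊃ V 11)].
  assert (BC_B_H4 : CDprov d ((V 49 ⊃ V 50) ⊃ N (V 50) ⊃ V 49 ⊃ V 51))
    by detach BC B_H4 [(9, V 49 ⊃ V 50); (35, V 51); (38, N (V 50)); (39, V 49)].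
  detach B_B_H3 BC_B_H4 [(9, V 70 ⊃ V 71); (19, N (V 71)); (20, V 70); (72, N (V 70))].
Qed.

Lemma cd_BS : CDprov d ((V 9 ⊃ V 10 ⊃ V 11 ⊃ V 12) ⊃ V 9 ⊃ (V 10 ⊃ V 11) ⊃ V 10 ⊃ V 12).
Proof.
  detach cd_B ax_S [(6, V 10 ⊃ V 11 ⊃ V 12); (7, (V 10 ⊃ V 11) ⊃ V 10 ⊃ V 12)].
Qed.

End Combinators.

Ltac decide_eqb :=
  repeat match goal with
  | |- context [?x =? ?y] => destruct (Nat.eqb_spec x y); try lia
  end.

Definition pin (a h K x : nat) : nat := if x =? a then h else K + x.

Lemma CDprov_pin d f a h K : h < K -> CDprov d f -> CDprov d (ren (pin a h K) f).
Proof.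
  intros Hh; apply CDprov_ren; unfold pin; intros x y.
  destruct (Nat.eqb_spec x a), (Nat.eqb_spec y a); lia.
Qed.

Lemma cd_lift1 d P Q h :
  CDprov d (P ⊃ Q) -> ~ occurs h P -> ~ occurs h Q ->
  CDprov d ((V h ⊃ P) ⊃ V h ⊃ Q).
Proof.
  intros HPQ HP HQ.
  assert (HB : CDprov d ((V (S h + 6) ⊃ V (S h + 7)) ⊃ (V h ⊃ V (S h + 6)) ⊃ V h ⊃ V (S h + 7)))
    by exact (CDprov_pin d _ 9 h (S h) (Nat.lt_succ_diag_r h) (cd_B d)).
  apply (cd_mp_general_major d _ _ _ (subst_of_list [(S h + 6, P); (S h + 7, Q)]) _ HB HPQ).
  - simpl; decide_eqb; reflexivity.
  - intros x Hx HxA; simpl in Hx, HxA.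
    assert (x = h) as -> by tauto.
    simpl; decide_eqb; split; [reflexivity | simpl; tauto].
  - simpl; decide_eqb; reflexivity.
  - intros Hd; apply CDprov_dn_ok in HPQ; specialize (HPQ Hd); simpl in *; tauto.
Qed.

Lemma cd_lift2 d P Q R h :
  CDprov d (P ⊃ Q ⊃ R) -> ~ occurs h P -> ~ occurs h Q -> ~ occurs h R ->
  CDprov d ((V h ⊃ P) ⊃ (V h ⊃ Q) ⊃ V h ⊃ R).
Proof.
  intros HPQR HP HQ HR.
  assert (H1 := cd_lift1 d _ _ h HPQR HP ltac:(simpl; tauto)).
  apply (cd_mp_general_major d _ _ _
           (subst_of_list [(9, V h ⊃ P); (10, V h); (11, Q); (12, R)]) _ (cd_BS d) H1).
  - reflexivity.
  - intros x Hx HxA; simpl in Hx, HxA; exfalso; tauto.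
  - reflexivity.
  - intros Hd; apply CDprov_dn_ok in HPQR; specialize (HPQR Hd); simpl in *; tauto.
Qed.

Definition ctx (L : list nat) (f : form) : form := fold_right (fun v g => V v ⊃ g) f L.
Definition ctxI (L : list nat) (f : form) : form :=
  fold_right (fun v g => (V v ⊃ V v) ⊃ g) f L.

Lemma ctx_cons v L f : ctx (v :: L) f = V v ⊃ ctx L f.
Proof. reflexivity. Qed.

Lemma ctxI_cons v L f : ctxI (v :: L) f = (V v ⊃ V v) ⊃ ctxI L f.
Proof. reflexivity. Qed.

Lemma occurs_ctx x L f : occurs x (ctx L f) <-> In x L \/ occurs x f.
Proof. induction L; simpl; [tauto|]. rewrite IHL; intuition. Qed.

Lemma occurs_ctxI x L f : occurs x (ctxI L f) <-> In x L \/ occurs x f.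
Proof. induction L; simpl; [tauto|]. rewrite IHL; intuition. Qed.

Lemma has_dn_ctxI L f : has_dn (ctxI L f) <-> has_dn f.
Proof. induction L; simpl; [tauto|]. rewrite IHL; tauto. Qed.

Lemma subst_ctx s L f :
  (forall v, In v L -> s v = V v ⊃ V v) -> subst s (ctx L f) = ctxI L (subst s f).
Proof. induction L; simpl; intros H; [reflexivity|]. rewrite H, IHL; auto. Qed.

Lemma subst_ctxI s L f :
  (forall v, In v L -> s v = V v) -> subst s (ctxI L f) = ctxI L (subst s f).
Proof. induction L; simpl; intros H; [reflexivity|]. rewrite H, IHL; auto. Qed.

Lemma In_lt_list_max v L : In v L -> v < S (list_max L).
Proof.
  intros Hv; assert (H : list_max L <= list_max L) by reflexivity.
  apply list_max_le, Forall_forall with (x := v) in H; [lia | exact Hv].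
Qed.

Lemma cd_ctx_dist d L p q :
  CDprov d ((V p ⊃ V q) ⊃ V p ⊃ V q) -> NoDup L -> ~ In p L -> ~ In q L ->
  CDprov d (ctx L (V p ⊃ V q) ⊃ ctx L (V p) ⊃ ctx L (V q)).
Proof.
  intros H0; induction L as [|v L IH]; intros HL Hp Hq; [exact H0|].
  inversion HL as [|? ? HvL HL']; subst; simpl in Hp, Hq.
  rewrite !ctx_cons; apply cd_lift2; [apply IH; tauto | ..]; rewrite occurs_ctx; simpl; intuition.
Qed.

Lemma cd_ctxI_distribute d L P Q :
  NoDup L -> CDprov d (ctxI L (P ⊃ Q)) -> CDprov d (ctxI L P ⊃ ctxI L Q).
Proof.
  intros HL HPQ.
  set (K := S (list_max L)).
  assert (HK : forall v, In v L -> v < K) by (intros; apply In_lt_list_max; auto).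
  assert (Hdist : CDprov d (ctx L (V (K + 9) ⊃ V (K + 15))
                            ⊃ ctx L (V (K + 9)) ⊃ ctx L (V (K + 15)))).
  { apply cd_ctx_dist; auto.
    - exact (CDprov_ren d _ (Nat.add K) ltac:(intros; lia) (cd_I_imp d)).
    - intros Hin; apply HK in Hin; lia.
    - intros Hin; apply HK in Hin; lia. }
  set (s := fun z => if in_dec Nat.eq_dec z L then V z ⊃ V z
                     else subst_of_list [(K + 9, P); (K + 15, Q)] z).
  assert (HsL : forall v, In v L -> s v = V v ⊃ V v)
    by (intros v Hv; unfold s; destruct (in_dec Nat.eq_dec v L); tauto).
  assert (Hs9 : s (K + 9) = P).
  { unfold s; destruct (in_dec Nat.eq_dec (K + 9) L) as [Hin|_];
      [apply HK in Hin; lia | simpl; decide_eqb; reflexivity]. }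
  assert (Hs15 : s (K + 15) = Q).
  { unfold s; destruct (in_dec Nat.eq_dec (K + 15) L) as [Hin|_];
      [apply HK in Hin; lia | simpl; decide_eqb; reflexivity]. }
  apply (cd_mp_general_major d _ _ _ s _ Hdist HPQ).
  - rewrite subst_ctx by exact HsL; cbn [subst]; rewrite Hs9, Hs15; reflexivity.
  - intros x Hx HxA; cbn [occurs] in Hx; rewrite !occurs_ctx in *; cbn [occurs] in *; tauto.
  - cbn [subst]; rewrite !subst_ctx by exact HsL; cbn [subst]; rewrite Hs9, Hs15; reflexivity.
  - intros Hd; apply CDprov_dn_ok in HPQ; specialize (HPQ Hd).
    rewrite has_dn_ctxI in HPQ; simpl; rewrite !has_dn_ctxI; simpl in HPQ; tauto.
Qed.

Lemma cd_ctxI_mp d L P Q C s f :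
  NoDup L -> CDprov d (ctxI L (P ⊃ Q)) -> CDprov d (ctxI L C) ->
  subst s P = C -> (forall v, In v L -> s v = V v) ->
  (forall x, occurs x Q -> ~ occurs x P -> ~ In x L -> s x = V x /\ ~ occurs x C) ->
  subst s Q = f -> dn_ok d f -> CDprov d (ctxI L f).
Proof.
  intros HL HPQ HC HPC HsL HQ Hf Hdn.
  apply (cd_mp_general_major d _ _ _ s _ (cd_ctxI_distribute d L P Q HL HPQ) HC).
  - rewrite subst_ctxI, HPC by exact HsL; reflexivity.
  - intros x Hx HxA; rewrite occurs_ctxI in Hx, HxA.
    destruct Hx as [Hx|Hx]; [tauto|].
    destruct (HQ x Hx) as [Hsx HxC]; [tauto | tauto | split; [exact Hsx|]].
    rewrite occurs_ctxI; tauto.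
  - rewrite subst_ctxI, Hf by exact HsL; reflexivity.
  - intros Hd; rewrite has_dn_ctxI; exact (Hdn Hd).
Qed.

Lemma cd_K_I_at d w K : w < K -> CDprov d (V (K + 50) ⊃ (V w ⊃ V w) ⊃ V (K + 50)).
Proof. intros Hw; exact (CDprov_pin d _ 64 w K Hw (cd_K_I d)). Qed.

Lemma cd_prepend_id d f w :
  CDprov d f -> ~ occurs w f -> CDprov d ((V w ⊃ V w) ⊃ f).
Proof.
  intros Hf Hw.
  apply (cd_mp_general_major d _ _ _ (subst_of_list [(S w + 50, f)]) _
           (cd_K_I_at d w (S w) (Nat.lt_succ_diag_r w)) Hf).
  - simpl; decide_eqb; reflexivity.
  - intros x Hx HxA; simpl in Hx, HxA.
    assert (x = w) as -> by tauto.
    simpl; decide_eqb; auto.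
  - simpl; decide_eqb; reflexivity.
  - intros Hd; apply CDprov_dn_ok in Hf; specialize (Hf Hd); simpl; tauto.
Qed.

Lemma cd_ctxI_weaken d L f :
  CDprov d f -> NoDup L -> (forall v, In v L -> ~ occurs v f) -> CDprov d (ctxI L f).
Proof.
  intros Hf; induction L as [|v L IH]; intros HL Hfresh; [exact Hf|].
  inversion HL as [|? ? HvL HL']; subst.
  rewrite ctxI_cons; apply cd_prepend_id.
  - apply IH; [exact HL' | intros u Hu; apply Hfresh; right; exact Hu].
  - rewrite occurs_ctxI; intros [Hv|Hv]; [contradiction | exact (Hfresh v (or_introl eq_refl) Hv)].
Qed.

Lemma cd_ctxI_prepend_id d L f w :
  NoDup L -> CDprov d (ctxI L f) -> ~ In w L -> ~ occurs w f ->
  CDprov d (ctxI L ((V w ⊃ V w) ⊃ f)).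
Proof.
  intros HL Hf HwL Hwf.
  set (K := S (Nat.max w (list_max L))).
  assert (HKL : forall v, In v L -> v < K)
    by (intros v Hv; apply In_lt_list_max in Hv; unfold K; lia).
  assert (HKI : CDprov d (ctxI L (V (K + 50) ⊃ (V w ⊃ V w) ⊃ V (K + 50)))).
  { apply cd_ctxI_weaken; [apply cd_K_I_at; unfold K; lia | exact HL |].
    intros v Hv Hocc; pose proof (HKL v Hv); simpl in Hocc.
    destruct Hocc as [-> | [[-> | ->] | ->]]; [lia | contradiction | contradiction | lia]. }
  apply (cd_ctxI_mp d L _ _ f (subst_of_list [(K + 50, f)]) _ HL HKI Hf).
  - simpl; decide_eqb; reflexivity.
  - intros v Hv; apply HKL in Hv; simpl; decide_eqb; reflexivity.
  - intros x Hx HxA _; simpl in Hx, HxA.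
    assert (x = w) as -> by tauto.
    simpl; decide_eqb; auto.
  - simpl; decide_eqb; reflexivity.
  - intros Hd; apply CDprov_dn_ok in Hf; specialize (Hf Hd).
    rewrite has_dn_ctxI in Hf; simpl; tauto.
Qed.

Lemma cd_ctxI_var_head d k M :
  NoDup (k :: M) -> CDprov d (ctxI (k :: M) (V k ⊃ V k)).
Proof.
  induction M as [|w M IH]; intros HM.
  - exact (CDprov_pin d _ 12 k (S k) (Nat.lt_succ_diag_r k) (cd_I_I d)).
  - inversion HM as [|? ? Hk HM']; inversion HM' as [|? ? Hw HM'']; subst.
    apply (cd_ctxI_prepend_id d [k] (ctxI M (V k ⊃ V k)) w).
    + constructor; [intros [] | constructor].
    + apply IH; constructor; [simpl in Hk; tauto | exact HM''].
    + simpl in Hk |- *; intuition.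
    + rewrite occurs_ctxI; simpl in Hk |- *; intuition.
Qed.

Lemma cd_ctxI_var d L k : NoDup L -> In k L -> CDprov d (ctxI L (V k ⊃ V k)).
Proof.
  induction L as [|a L IH]; intros HL Hk; [destruct Hk|].
  inversion HL as [|? ? HaL HL']; subst.
  destruct (Nat.eq_dec a k) as [->|Hak].
  - exact (cd_ctxI_var_head d k L HL).
  - rewrite ctxI_cons; apply cd_prepend_id.
    + apply IH; [exact HL' | destruct Hk; [contradiction | assumption]].
    + rewrite occurs_ctxI; simpl; intuition.
Qed.

Section IdentityStep.
Variables (d : bool) (L : list nat) (K : nat).
Hypotheses (HL : NoDup L) (HK : forall v, In v L -> v < K).

Lemma cd_ctxI_weaken_above f :
  CDprov d f -> CDprov d (ctxI L (ren (Nat.add K) f)).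
Proof.
  intros Hf; apply cd_ctxI_weaken; [exact (CDprov_ren d _ (Nat.add K) ltac:(intros; lia) Hf) | exact HL |].
  intros v Hv Hocc; apply occurs_ren in Hocc as [y [_ ->]]; apply HK in Hv; lia.
Qed.

Lemma cd_ctxI_id_imp u1 u2 :
  (forall x, occurs x u1 -> In x L) ->
  CDprov d (ctxI L (u1 ⊃ u1)) -> CDprov d (ctxI L (u2 ⊃ u2)) ->
  CDprov d (ctxI L ((u1 ⊃ u2) ⊃ u1 ⊃ u2)).
Proof.
  intros Hu1 H1 H2.
  assert (Hlow : forall x, occurs x u1 -> x < K) by auto.
  assert (Hdn1 : dn_ok d u1)
    by (intros Hd Hc; apply (CDprov_dn_ok d _ H1 Hd); rewrite has_dn_ctxI; simpl; auto).
  assert (Hdn2 : dn_ok d u2)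
    by (intros Hd Hc; apply (CDprov_dn_ok d _ H2 Hd); rewrite has_dn_ctxI; simpl; auto).
  assert (Hmono : CDprov d (ctxI L
            ((V (K + 109) ⊃ V (K + 106)) ⊃ (V (K + 107) ⊃ V (K + 67))
             ⊃ (V (K + 106) ⊃ V (K + 107)) ⊃ V (K + 109) ⊃ V (K + 67))))
    by exact (cd_ctxI_weaken_above _ (cd_imp_mono d)).
  assert (Hmono1 : CDprov d (ctxI L
            ((V (K + 107) ⊃ V (K + 67)) ⊃ (u1 ⊃ V (K + 107)) ⊃ u1 ⊃ V (K + 67)))).
  { apply (cd_ctxI_mp d _ _ _ _ (subst_of_list [(K + 109, u1); (K + 106, u1)]) _ HL Hmono H1).
    - simpl; decide_eqb; reflexivity.
    - intros v Hv; apply HK in Hv; simpl; decide_eqb; reflexivity.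
    - intros x Hx HxA _; simpl in Hx, HxA.
      assert (Hx' : x = K + 107 \/ x = K + 67) by tauto.
      split; [simpl; decide_eqb; reflexivity|].
      simpl; intros Hc; assert (x < K) by (destruct Hc; auto); lia.
    - simpl; decide_eqb; reflexivity.
    - intros Hd; specialize (Hdn1 Hd); simpl in *; tauto. }
  apply (cd_ctxI_mp d _ _ _ _ (subst_of_list [(K + 107, u2); (K + 67, u2)]) _ HL Hmono1 H2).
  - simpl; decide_eqb; reflexivity.
  - intros v Hv; apply HK in Hv; simpl; decide_eqb; reflexivity.
  - intros x Hx HxA HxL; exfalso; apply HxL, Hu1; simpl in Hx, HxA; tauto.
  - simpl; rewrite subst_fix; [decide_eqb; reflexivity|].
    intros x Hx; apply Hlow in Hx; simpl; decide_eqb; reflexivity.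
  - intros Hd; specialize (Hdn1 Hd); specialize (Hdn2 Hd); simpl in *; tauto.
Qed.

Lemma cd_ctxI_id_neg u :
  CDprov d (ctxI L (u ⊃ u)) -> dn_ok d (N u) -> CDprov d (ctxI L (N u ⊃ N u)).
Proof.
  intros H1 Hdn.
  assert (Hcontra : CDprov d (ctxI L
            ((V (K + 70) ⊃ V (K + 71)) ⊃ N (V (K + 71)) ⊃ N (V (K + 70)))))
    by exact (cd_ctxI_weaken_above _ (cd_contra d)).
  apply (cd_ctxI_mp d _ _ _ _ (subst_of_list [(K + 70, u); (K + 71, u)]) _ HL Hcontra H1).
  - simpl; decide_eqb; reflexivity.
  - intros v Hv; apply HK in Hv; simpl; decide_eqb; reflexivity.
  - intros x Hx HxA; simpl in Hx, HxA; tauto.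
  - simpl; decide_eqb; reflexivity.
  - intros Hd; specialize (Hdn Hd); simpl in *; tauto.
Qed.

End IdentityStep.

(* The prefix of identities puts every variable of [u] into the antecedent of
   each detachment, so variables shared by subformulas of [u] are never renamed
   apart. *)
Lemma cd_ctxI_id d m u :
  (forall x, occurs x u -> x < m) -> dn_ok d u -> CDprov d (ctxI (seq 0 m) (u ⊃ u)).
Proof.
  assert (HL : NoDup (seq 0 m)) by apply seq_NoDup.
  assert (Hlow : forall v, In v (seq 0 m) -> v < m) by (intros v Hv; apply in_seq in Hv; lia).
  induction u as [k|u1 IH1 u2 IH2|u1 IH1]; intros Hm Hdn.
  - apply cd_ctxI_var; [exact HL | apply in_seq; specialize (Hm k eq_refl); lia].
  - apply (cd_ctxI_id_imp d _ m HL Hlow).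
    + intros x Hx; apply in_seq; assert (x < m) by (apply Hm; simpl; auto); lia.
    + apply IH1; [intros; apply Hm; simpl; auto | intros Hd Hc; apply (Hdn Hd); simpl; auto].
    + apply IH2; [intros; apply Hm; simpl; auto | intros Hd Hc; apply (Hdn Hd); simpl; auto].
  - apply (cd_ctxI_id_neg d _ m HL Hlow); [|exact Hdn].
    apply IH1; [intros; apply Hm; simpl; auto | intros Hd Hc; apply (Hdn Hd); simpl; auto].
Qed.

Lemma cd_ctxI_discharge d L f : CDprov d (ctxI L f) -> CDprov d f.
Proof.
  induction L as [|v L IH]; intros H; [exact H|].
  apply IH, (cd_mp_general_minor d _ _ _ (fun _ => V v) H (cd_I d)); reflexivity.
Qed.

Lemma cd_id d u : dn_ok d u -> CDprov d (u ⊃ u).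
Proof.
  intros Hdn; apply (cd_ctxI_discharge d (seq 0 (S (maxvar u)))), cd_ctxI_id; [|exact Hdn].
  intros x Hx; apply occurs_le_maxvar in Hx; lia.
Qed.

Lemma cd_axiom_instance d a s :
  is_axiom a -> dn_ok d (subst s a) -> CDprov d (subst s a).
Proof.
  intros Ha Hdn.
  exact (cd_mp_general_minor d _ _ a s (cd_id d _ Hdn) (cd_axiom d a Ha) eq_refl).
Qed.

Lemma CDprov_MPprov d b : CDprov d b -> MPprov b.
Proof.
  induction 1 as [a f Ha [r [_ ->]] | M C M' C' A B s f HM IHM HC IHC
                  [r1 [_ HM']] [r2 [_ HC']] HMe _ [Hu _] [r [_ ->]] _].
  - apply mp_sub, mp_ax, Ha.
  - apply mp_sub, mp_mp with (subst s A).
    + change (MPprov (subst s (A ⊃ B))); rewrite <- HMe, HM'; apply mp_sub, mp_sub, IHM.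
    + unfold unifier in Hu; rewrite Hu, HC'; apply mp_sub, mp_sub, IHC.
Qed.

Lemma MPprov_subst_cd b : MPprov b -> forall s, CDprov false (subst s b).
Proof.
  induction 1 as [a Ha | s f _ IH | a b _ IHab _ IHa]; intros t.
  - exact (cd_axiom_instance false a t Ha (dn_ok_false _)).
  - rewrite subst_comp; apply IH.
  - exact (cd_mp false _ _ (IHab t) (IHa t)).
Qed.

Lemma MPinst_dnf_cd b : MPinst_dnf b -> CDprov true b.
Proof.
  induction 1 as [a s Ha Hd | a b _ IHab _ IHa _].
  - exact (cd_axiom_instance true a s Ha (fun _ => Hd)).
  - exact (cd_mp true _ _ IHab IHa).
Qed.

Theorem theorem7 :
  (forall b : form, CDprov false b <-> MPprov b) /\
  (forall b : form, MPinst_dnf b -> CDprov true b).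
Proof.
  split.
  - intros b; split; [apply CDprov_MPprov | intros Hb].
    rewrite <- (subst_id b); exact (MPprov_subst_cd b Hb V).
  - exact MPinst_dnf_cd.
Qed.
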